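(* Let $C>0$, $a>1$, $m>0$ and $m'<ma$. Let $Y:\mathbb{R}_+\to\mathbb{R}_+$ be a $\mathcal{C}^1$ function satisfying $$\frac{d}{dt}Y+\frac{a}{1+t}Y\leq C\left(\frac{Y}{(1+t)^2}+Y^2+(1+t)^{m'-1}Y^{m+1}\right)\quad\text{on }\mathbb{R}_+.$$ Then there exists $c=c(a,m,m',C)>0$ such that if $Y(0)\leq c$, then $$Y(t)\leq 2e^{\frac{Ct}{1+t}}\frac{Y(0)}{(1+t)^a}\quad\text{for all }t\geq0.$$ *)

From Stdlib Require Import Reals Lra.
Open Scope R_scope.

(* Real power x^b for x >= 0, with the convention 0^b = 0 (b > 0).
   Stdlib's Rpower 0 b = exp (b * ln 0) = 1, which is wrong at 0. *)
Definition rpow (x b : R) : R := if Rlt_dec 0 x then Rpower x b else 0.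

Definition C1_Rplus (Y Y' : R -> R) : Prop :=
  (forall t, 0 <= t -> forall eps, 0 < eps -> exists delta, 0 < delta /\
     forall h, h <> 0 -> 0 <= t + h -> Rabs h < delta ->
       Rabs ((Y (t + h) - Y t) / h - Y' t) < eps) /\
  (forall t, 0 <= t -> forall eps, 0 < eps -> exists delta, 0 < delta /\
     forall s, 0 <= s -> Rabs (s - t) < delta -> Rabs (Y' s - Y' t) < eps).

From Stdlib Require Import Reals Lra Classical.
From Coquelicot Require Import Coquelicot.
Open Scope R_scope.

(* Decay of a C^1 solution of a damped Riccati-type differential inequality
   (Lemma A.1).  Write P(t) = Y(t) (1+t)^a for the weighted solution.

   Proof idea (a bootstrap).  As long as P <= M on [0, s], the nonlinear
   terms are absorbed into a linear one with an integrable coefficient: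
       C Y^2 + C (1+t)^(m'-1) Y^(m+1) <= g(t) Y,
       g(t) = C M (1+t)^(-a) + C M^m (1+t)^(m'-ma-1),
   so that Y' + k Y <= 0 with k = a/(1+t) - C/(1+t)^2 - g.  Multiplying by the
   integrating factor H = exp(int_0^t k) = (1+t)^a exp(-Ct/(1+t) - G(t)),
   G = int_0^t g, shows that Y H is nonincreasing, hence
       P(s) <= Y(0) exp(Cs/(1+s)) exp(G(s)) <= 2 Y(0) exp(Cs/(1+s)),
   provided M is so small that G <= 1/2.  If moreover 2 Y(0) e^C < M, this
   improves P <= M to P < M, and a continuity argument gives P <= M, hence the
   bound, for all times. *)

Lemma Rpower_pos x y : 0 < Rpower x y.
Proof. apply exp_pos. Qed.

(* e^(1/2) <= 2: the loss allowed by the absorbed terms, since G <= 1/2. *)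
Lemma exp_half_le_2 : exp (1 / 2) <= 2.
Proof.
assert (hsq : exp (1 / 2) * exp (1 / 2) = exp 1)
  by (rewrite <- exp_plus; f_equal; field).
assert (h3 := exp_le_3). assert (hpos := exp_pos (1 / 2)). nra.
Qed.

Lemma exp_saturating_le C t : 0 < C -> 0 <= t -> exp (C * t / (1 + t)) <= exp C.
Proof.
intros hC ht. destruct (Req_dec (C * t / (1 + t)) C) as [-> | hne]; [lra|].
left. apply exp_increasing.
apply (Rmult_lt_reg_r (1 + t)); [lra|].
unfold Rdiv. rewrite Rmult_assoc, Rinv_l by lra. nra.
Qed.

Lemma continuity_pt_near f x eps : continuity_pt f x -> 0 < eps ->
  exists d, 0 < d /\ forall y, Rabs (y - x) < d -> Rabs (f y - f x) < eps.
Proof.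
intros Hc he. destruct (Hc eps he) as [d [hd Hd]].
exists d. split; [exact hd|]. intros y hy.
destruct (Req_dec y x) as [-> | hne].
- unfold Rminus. rewrite Rplus_opp_r, Rabs_R0. exact he.
- apply (Hd y). split; [split; [exact I | auto] | exact hy].
Qed.

Lemma le_at_of_le_before P M t : continuity_pt P t -> 0 < t ->
  (forall s, 0 <= s < t -> P s <= M) -> P t <= M.
Proof.
intros Hc ht Hbefore. apply Rnot_lt_le. intros hlt.
destruct (continuity_pt_near P t (P t - M) Hc ltac:(lra)) as [d [hd Hd]].
set (s := Rmax 0 (t - d / 2)).
assert (0 <= s) by apply Rmax_l.
assert (s < t) by (unfold s; apply Rmax_lub_lt; lra).
assert (t - d / 2 <= s) by apply Rmax_r.
assert (hst : Rabs (s - t) < d) by (rewrite Rabs_left by lra; lra).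
specialize (Hd s hst). apply Rabs_def2 in Hd.
specialize (Hbefore s ltac:(lra)). lra.
Qed.

Lemma continuous_bootstrap (P : R -> R) (M T : R) :
  (forall t, 0 <= t -> continuity_pt P t) -> P 0 <= M ->
  (forall t, 0 <= t -> (forall s, 0 <= s <= t -> P s <= M) -> P t < M) ->
  0 <= T -> forall s, 0 <= s <= T -> P s <= M.
Proof.
intros Hc H0 Hstep hT.
set (E := fun x => 0 <= x <= T /\ forall s, 0 <= s <= x -> P s <= M).
assert (hE0 : E 0).
{ split; [lra|]. intros s hs. replace s with 0 by lra. exact H0. }
destruct (completeness E ltac:(exists T; intros x [hx _]; lra) (ex_intro _ 0 hE0))
  as [ts [hub hlub]].
assert (hts0 : 0 <= ts) by (apply hub; exact hE0).
assert (htsT : ts <= T) by (apply hlub; intros x [hx _]; lra).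
assert (Hbefore : forall s, 0 <= s < ts -> P s <= M).
{ intros s hs. apply NNPP. intros hn.
  assert (is_upper_bound E s) as Hs.
  { intros x [hx Hx]. apply Rnot_lt_le. intros hsx. apply hn, Hx. lra. }
  specialize (hlub s Hs). lra. }
assert (Hupto : forall s, 0 <= s <= ts -> P s <= M).
{ intros s hs. destruct (Req_dec s ts) as [-> | hne]; [|apply Hbefore; lra].
  destruct (Req_dec ts 0) as [-> | hne0]; [exact H0|].
  apply le_at_of_le_before; [apply Hc | lra | exact Hbefore]; lra. }
destruct (Req_dec ts T) as [<- | hne]; [exact Hupto|].
exfalso.
assert (Hlt := Hstep ts hts0 Hupto).
destruct (continuity_pt_near P ts (M - P ts) (Hc ts hts0) ltac:(lra)) as [d [hd Hd]].
set (x := Rmin T (ts + d / 2)).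
assert (ts < x) by (unfold x; apply Rmin_glb_lt; lra).
assert (x <= T) by apply Rmin_l.
assert (x <= ts + d / 2) by apply Rmin_r.
assert (hEx : E x).
{ split; [lra|]. intros s hs.
  destruct (Rle_lt_dec s ts) as [h | h]; [apply Hupto; lra|].
  assert (hsts : Rabs (s - ts) < d) by (rewrite Rabs_right by lra; lra).
  specialize (Hd s hsts). apply Rabs_def2 in Hd. lra. }
specialize (hub x hEx). lra.
Qed.

Lemma nonincreasing_of_deriv_nonpos f f' s : 0 <= s ->
  (forall u, 0 <= u <= s -> derivable_pt_lim f u (f' u)) ->
  (forall u, 0 <= u <= s -> f' u <= 0) -> f s <= f 0.
Proof.
intros hs Hd Hneg. destruct (Req_dec s 0) as [-> | hs0]; [lra|].
destruct (MVT_cor2 f f' 0 s ltac:(lra) Hd) as [u [eq hu]].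
assert (f' u <= 0) by (apply Hneg; lra). nra.
Qed.

(* Y is only differentiable from the right at 0; extending it affinely to
   t < 0 gives a function with a two-sided derivative on [0, oo), to which the
   mean value theorem applies. *)
Definition Yext (Y Y' : R -> R) (t : R) : R :=
  if Rle_dec 0 t then Y t else Y 0 + t * Y' 0.

Lemma Yext_eq Y Y' t : 0 <= t -> Yext Y Y' t = Y t.
Proof. intros ht. unfold Yext. destruct (Rle_dec 0 t); [reflexivity | lra]. Qed.

Lemma Yext_deriv Y Y' t : C1_Rplus Y Y' -> 0 <= t ->
  derivable_pt_lim (Yext Y Y') t (Y' t).
Proof.
intros [HD _] ht eps heps.
destruct (HD t ht eps heps) as [d [hd Hd]].
destruct (Req_dec t 0) as [-> | ht0].
- exists (mkposreal d hd). intros h hh hlt. simpl in hlt.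
  rewrite (Yext_eq _ _ 0), Rplus_0_l by lra.
  destruct (Rle_dec 0 h) as [hp | hn].
  + rewrite Yext_eq by lra.
    specialize (Hd h hh ltac:(lra) hlt). rewrite Rplus_0_l in Hd. exact Hd.
  + unfold Yext. destruct (Rle_dec 0 h); [lra|].
    replace ((Y 0 + h * Y' 0 - Y 0) / h - Y' 0) with 0 by (field; exact hh).
    rewrite Rabs_R0. exact heps.
- assert (hdt : 0 < Rmin d t) by (apply Rmin_pos; lra).
  exists (mkposreal _ hdt). intros h hh hlt. simpl in hlt.
  assert (Rabs h < d) by (eapply Rlt_le_trans; [exact hlt | apply Rmin_l]).
  assert (hht : Rabs h < t) by (eapply Rlt_le_trans; [exact hlt | apply Rmin_r]).
  assert (0 <= t + h) by (apply Rabs_def2 in hht; lra).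
  rewrite !Yext_eq by lra. apply Hd; assumption.
Qed.

Lemma Rpower_one_minus_div x a : 0 < x -> Rpower x (1 - a) / x = / Rpower x a.
Proof.
intros hx. replace (1 - a) with (1 + - a) by ring.
rewrite Rpower_plus, Rpower_1, Rpower_Ropp by exact hx.
field. split; [apply Rgt_not_eq, Rpower_pos | lra].
Qed.

(* If y (1+u)^a <= M, the quadratic term C y^2 is at most
   C M (1+u)^(-a) y, a linear term with an integrable coefficient. *)
Lemma quadratic_absorb C a M y u : 0 < C -> 0 <= u -> 0 <= y ->
  y * Rpower (1 + u) a <= M ->
  C * y ^ 2 <= C * M * Rpower (1 + u) (1 - a) / (1 + u) * y.
Proof.
intros hC hu hy hyM.
assert (hE := Rpower_pos (1 + u) a).
replace (C * M * Rpower (1 + u) (1 - a) / (1 + u) * y)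
  with (C * y * (M * (Rpower (1 + u) (1 - a) / (1 + u)))) by (field; lra).
rewrite Rpower_one_minus_div by lra.
assert (y <= M * / Rpower (1 + u) a).
{ apply (Rmult_le_reg_r (Rpower (1 + u) a)); [exact hE|].
  rewrite Rmult_assoc, Rinv_l by lra. lra. }
replace (C * y ^ 2) with (C * y * y) by ring.
apply Rmult_le_compat_l; [nra | exact H].
Qed.

(* If y (1+u)^a <= M, the superlinear term C (1+u)^(m'-1) y^(m+1) is at most
   C M^m (1+u)^(m'-ma-1) y, a linear term with an integrable coefficient
   since m' < ma. *)
Lemma power_absorb C a m m' M y u : 0 < C -> 0 < m -> 0 <= u -> 0 <= y ->
  y * Rpower (1 + u) a <= M ->
  C * Rpower (1 + u) (m' - 1) * rpow y (m + 1) <=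
  C * Rpower M m * Rpower (1 + u) (m' - m * a) / (1 + u) * y.
Proof.
intros hC hm hu hy hyM. unfold rpow.
destruct (Rlt_dec 0 y) as [hy0 | hy0].
2:{ replace y with 0 by lra. rewrite !Rmult_0_r. lra. }
assert (hx : 0 < 1 + u) by lra.
assert (hM : 0 < M) by (assert (h := Rpower_pos (1 + u) a); nra).
assert (hy_le : y <= M * Rpower (1 + u) (- a)).
{ rewrite Rpower_Ropp.
  apply (Rmult_le_reg_r (Rpower (1 + u) a)); [apply Rpower_pos|].
  rewrite Rmult_assoc, Rinv_l by (apply Rgt_not_eq, Rpower_pos). lra. }
assert (hym : Rpower y m <= Rpower M m * Rpower (1 + u) (- (m * a))).
{ replace (- (m * a)) with (- a * m) by ring.
  rewrite <- Rpower_mult, Rpower_mult_distr by (try exact hM; apply Rpower_pos).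
  apply Rle_Rpower_l; lra. }
assert (hsplit : Rpower y (m + 1) = Rpower y m * y)
  by (rewrite Rpower_plus, Rpower_1 by exact hy0; reflexivity).
assert (hexp : Rpower (1 + u) (m' - 1) * Rpower (1 + u) (- (m * a))
               = Rpower (1 + u) (m' - m * a) / (1 + u)).
{ rewrite <- Rpower_plus. replace (m' - m * a) with (m' - 1 - m * a + 1) by ring.
  rewrite (Rpower_plus _ 1), Rpower_1 by exact hx.
  replace (m' - 1 + - (m * a)) with (m' - 1 - m * a) by ring. field; lra. }
rewrite hsplit, <- Rmult_assoc.
apply Rle_trans with (C * Rpower (1 + u) (m' - 1) * (Rpower M m * Rpower (1 + u) (- (m * a))) * y).
- apply Rmult_le_compat_r; [lra|].
  apply Rmult_le_compat_l; [|exact hym].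
  apply Rmult_le_pos; [lra | left; apply Rpower_pos].
- right. replace (C * Rpower M m * Rpower (1 + u) (m' - m * a) / (1 + u) * y)
    with (C * Rpower M m * (Rpower (1 + u) (m' - m * a) / (1 + u)) * y) by (unfold Rdiv; ring).
  rewrite <- hexp. ring.
Qed.

(* The coefficient g of the absorbed terms, with A = C M and B = C M^m. *)
Definition absorb_rate (a m m' A B t : R) : R :=
  A * Rpower (1 + t) (1 - a) / (1 + t) + B * Rpower (1 + t) (m' - m * a) / (1 + t).

(* G(t) = int_0^t g, computed in closed form. *)
Definition absorb_integral (a m m' A B t : R) : R :=
  A / (a - 1) * (1 - Rpower (1 + t) (1 - a))
  + B / (m * a - m') * (1 - Rpower (1 + t) (m' - m * a)).

(* H(t) = (1+t)^a exp(-Ct/(1+t) - G(t)) = exp(int_0^t k). *)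
Definition integrating_factor (C a m m' A B t : R) : R :=
  exp (a * ln (1 + t) - C * t / (1 + t) - absorb_integral a m m' A B t).

Lemma integrating_factor_deriv C a m m' A B t : 1 < a -> m' < m * a -> 0 <= t ->
  derivable_pt_lim (integrating_factor C a m m' A B) t
    (integrating_factor C a m m' A B t
     * (a / (1 + t) - C / (1 + t) ^ 2 - absorb_rate a m m' A B t)).
Proof.
intros ha hm ht. apply is_derive_Reals.
unfold integrating_factor, absorb_integral, absorb_rate, Rpower.
auto_derive.
- repeat split; lra.
- match goal with |- _ * exp ?x = exp ?y * _ => replace x with y by (field; lra) end.
  field. lra.
Qed.

Lemma absorb_integral_0 a m m' A B : absorb_integral a m m' A B 0 = 0.
Proof. unfold absorb_integral, Rpower. rewrite Rplus_0_r, ln_1, !Rmult_0_r, exp_0. ring. Qed.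

Lemma absorb_integral_le a m m' A B t : 1 < a -> m' < m * a -> 0 <= A -> 0 <= B ->
  absorb_integral a m m' A B t <= A / (a - 1) + B / (m * a - m').
Proof.
intros ha hm hA hB. unfold absorb_integral.
assert (0 <= A / (a - 1)) by (apply Rle_mult_inv_pos; lra).
assert (0 <= B / (m * a - m')) by (apply Rle_mult_inv_pos; lra).
assert (h1 := exp_pos ((1 - a) * ln (1 + t))).
assert (h2 := exp_pos ((m' - m * a) * ln (1 + t))).
unfold Rpower. nra.
Qed.

Section APriori.

Variables (C a m m' M : R) (Y Y' : R -> R).
Hypotheses (hC : 0 < C) (ha : 1 < a) (hm : 0 < m) (hm' : m' < m * a) (hM : 0 < M).
Hypothesis hsmall : C * M / (a - 1) + C * Rpower M m / (m * a - m') <= 1 / 2.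
Hypothesis HC1 : C1_Rplus Y Y'.
Hypothesis Hpos : forall t, 0 <= t -> 0 <= Y t.
Hypothesis Hineq : forall t, 0 <= t ->
  Y' t + a / (1 + t) * Y t <=
  C * (Y t / (1 + t) ^ 2 + Y t ^ 2 + Rpower (1 + t) (m' - 1) * rpow (Y t) (m + 1)).

Let A := C * M.
Let B := C * Rpower M m.
Let H := integrating_factor C a m m' A B.
Let rate u := a / (1 + u) - C / (1 + u) ^ 2 - absorb_rate a m m' A B u.

Lemma damped_inequality u : 0 <= u -> Y u * Rpower (1 + u) a <= M ->
  Y' u + rate u * Y u <= 0.
Proof.
intros hu hYM.
assert (hq := quadratic_absorb C a M (Y u) u hC hu (Hpos u hu) hYM).
assert (hp := power_absorb C a m m' M (Y u) u hC hm hu (Hpos u hu) hYM).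
assert (hi := Hineq u hu).
replace (C * (Y u / (1 + u) ^ 2 + Y u ^ 2 + Rpower (1 + u) (m' - 1) * rpow (Y u) (m + 1)))
  with (C / (1 + u) ^ 2 * Y u + C * Y u ^ 2
        + C * Rpower (1 + u) (m' - 1) * rpow (Y u) (m + 1)) in hi by (field; lra).
unfold rate, absorb_rate, A, B.
replace ((a / (1 + u) - C / (1 + u) ^ 2 -
          (C * M * Rpower (1 + u) (1 - a) / (1 + u)
           + C * Rpower M m * Rpower (1 + u) (m' - m * a) / (1 + u))) * Y u)
  with (a / (1 + u) * Y u - C / (1 + u) ^ 2 * Y u
        - C * M * Rpower (1 + u) (1 - a) / (1 + u) * Y u
        - C * Rpower M m * Rpower (1 + u) (m' - m * a) / (1 + u) * Y u) by ring.
lra.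
Qed.

(* Bootstrap step: P <= M on [0, s] implies P(s) <= 2 Y(0) exp(Cs/(1+s)),
   because Y H is nonincreasing, H(0) = 1, and exp(G) <= 2. *)
Lemma bootstrap_step s : 0 <= s ->
  (forall u, 0 <= u <= s -> Yext Y Y' u * Rpower (1 + u) a <= M) ->
  Y s * Rpower (1 + s) a <= 2 * Y 0 * exp (C * s / (1 + s)).
Proof.
intros hs Hbound.
set (W := fun u => Yext Y Y' u * H u).
assert (hW : W s <= W 0).
{ apply (nonincreasing_of_deriv_nonpos W (fun u => Y' u * H u + Yext Y Y' u * (H u * rate u)) s hs).
  - intros u hu. apply derivable_pt_lim_mult.
    + apply Yext_deriv; [exact HC1 | lra].
    + apply integrating_factor_deriv; lra.
  - intros u hu. assert (hHu : 0 < H u) by apply exp_pos.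
    specialize (Hbound u hu). rewrite Yext_eq in * by lra.
    assert (hd := damped_inequality u ltac:(lra) Hbound).
    replace (Y' u * H u + Y u * (H u * rate u)) with (H u * (Y' u + rate u * Y u)) by ring.
    nra. }
assert (hW0 : W 0 = Y 0).
{ unfold W, H, integrating_factor. rewrite Yext_eq, absorb_integral_0 by lra.
  rewrite Rplus_0_r, ln_1. replace (a * 0 - C * 0 / 1 - 0) with 0 by field.
  rewrite exp_0. ring. }
set (G := absorb_integral a m m' A B s).
assert (hWs : Y s * Rpower (1 + s) a = W s * exp (C * s / (1 + s)) * exp G).
{ unfold W, H, integrating_factor, Rpower. fold G. rewrite Yext_eq by exact hs.
  unfold Rminus. rewrite !exp_plus, !exp_Ropp. field.
  split; apply Rgt_not_eq, exp_pos. }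
assert (hG : exp G <= 2).
{ apply Rle_trans with (exp (1 / 2)); [|exact exp_half_le_2].
  destruct (Req_dec G (1 / 2)) as [-> | hne]; [lra|]. left. apply exp_increasing.
  assert (hle := absorb_integral_le a m m' A B s ha hm' ltac:(unfold A; nra)
                   ltac:(unfold B; left; apply Rmult_lt_0_compat; [lra | apply exp_pos])).
  fold G in hle. unfold A, B in hle. lra. }
assert (hWsnn : 0 <= W s).
{ unfold W. rewrite Yext_eq by exact hs. assert (0 < H s) by apply exp_pos.
  assert (0 <= Y s) by (apply Hpos; exact hs). nra. }
assert (hY0 : 0 <= Y 0) by (apply Hpos; lra).
assert (hexp := exp_pos (C * s / (1 + s))). assert (hexpG := exp_pos G).
rewrite hWs. rewrite hW0 in hW.
apply Rle_trans with (W s * 2 * exp (C * s / (1 + s))).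
- replace (W s * 2 * exp (C * s / (1 + s))) with (W s * exp (C * s / (1 + s)) * 2) by ring.
  apply Rmult_le_compat_l; [apply Rmult_le_pos|]; lra.
- replace (2 * Y 0 * exp (C * s / (1 + s))) with (Y 0 * 2 * exp (C * s / (1 + s))) by ring.
  apply Rmult_le_compat_r; lra.
Qed.

(* If 2 Y(0) e^C < M, the step improves P <= M strictly, so by continuity
   the bound of the step holds for all times. *)
Lemma weighted_bound : 2 * Y 0 * exp C < M -> forall t, 0 <= t ->
  Y t * Rpower (1 + t) a <= 2 * Y 0 * exp (C * t / (1 + t)).
Proof.
intros hY0 t ht.
set (P := fun u => Yext Y Y' u * Rpower (1 + u) a).
assert (hY0nn : 0 <= Y 0) by (apply Hpos; lra).
assert (hP : forall s, 0 <= s -> (forall u, 0 <= u <= s -> P u <= M) ->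
          P s <= 2 * Y 0 * exp (C * s / (1 + s))).
{ intros s hs Hs. unfold P. rewrite Yext_eq by exact hs. apply bootstrap_step; assumption. }
apply Rle_trans with (P t); [unfold P; rewrite Yext_eq by exact ht; lra|].
apply hP; [exact ht|].
apply (continuous_bootstrap P M t); try lra.
- intros u hu. apply continuity_pt_mult; apply derivable_continuous_pt.
  + exists (Y' u). apply Yext_deriv; assumption.
  + eexists. apply is_derive_Reals. unfold Rpower. auto_derive; [lra | reflexivity].
- unfold P, Rpower. rewrite Yext_eq, Rplus_0_r, ln_1, Rmult_0_r, exp_0 by lra.
  assert (1 <= exp C) by (assert (h := exp_ineq1_le C); lra). nra.
- intros s hs Hs. eapply Rle_lt_trans; [apply hP; assumption|].
  assert (h := exp_saturating_le C s hC hs). nra.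
Qed.

End APriori.

Lemma small_threshold C a m m' : 0 < C -> 1 < a -> 0 < m -> m' < m * a ->
  exists M, 0 < M /\ C * M / (a - 1) + C * Rpower M m / (m * a - m') <= 1 / 2.
Proof.
intros hC ha hm hm'.
set (D := (m * a - m') / (4 * C)).
assert (hD : 0 < D) by (unfold D; apply Rdiv_lt_0_compat; lra).
set (M := Rmin ((a - 1) / (4 * C)) (Rpower D (1 / m))).
assert (hM : 0 < M) by (apply Rmin_pos; [apply Rdiv_lt_0_compat; lra | apply Rpower_pos]).
exists M. split; [exact hM|].
assert (hlin : C * M / (a - 1) <= 1 / 4).
{ assert (h := Rmin_l ((a - 1) / (4 * C)) (Rpower D (1 / m))). fold M in h.
  apply (Rmult_le_reg_r (a - 1)); [lra|].
  replace (C * M / (a - 1) * (a - 1)) with (C * M) by (field; lra).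
  apply (Rmult_le_compat_l C) in h; [|lra].
  replace (C * ((a - 1) / (4 * C))) with (1 / 4 * (a - 1)) in h by (field; lra). exact h. }
assert (hpow : Rpower M m <= D).
{ apply Rle_trans with (Rpower (Rpower D (1 / m)) m).
  - apply Rle_Rpower_l; [lra|]. split; [exact hM | apply Rmin_r].
  - rewrite Rpower_mult. replace (1 / m * m) with 1 by (field; lra).
    rewrite Rpower_1 by exact hD. lra. }
assert (hnl : C * Rpower M m / (m * a - m') <= 1 / 4).
{ apply (Rmult_le_reg_r (m * a - m')); [lra|].
  replace (C * Rpower M m / (m * a - m') * (m * a - m')) with (C * Rpower M m) by (field; lra).
  apply (Rmult_le_compat_l C) in hpow; [|lra].
  unfold D in hpow. replace (C * ((m * a - m') / (4 * C))) with (1 / 4 * (m * a - m')) in hpow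
    by (field; lra). exact hpow. }
lra.
Qed.

(* Lemma A.1, with c = M / (3 e^C) so that 2 Y(0) e^C < M. *)
Theorem lemmaA1 (C a m m' : R) (hC : 0 < C) (ha : 1 < a) (hm : 0 < m)
  (hm' : m' < m * a) :
  exists c : R, 0 < c /\
    forall Y Y' : R -> R,
      C1_Rplus Y Y' ->
      (forall t, 0 <= t -> 0 <= Y t) ->
      (forall t, 0 <= t ->
         Y' t + a / (1 + t) * Y t <=
         C * (Y t / (1 + t) ^ 2 + Y t ^ 2
              + Rpower (1 + t) (m' - 1) * rpow (Y t) (m + 1))) ->
      Y 0 <= c ->
      forall t, 0 <= t ->
        Y t <= 2 * exp (C * t / (1 + t)) * Y 0 / Rpower (1 + t) a.
Proof.
destruct (small_threshold C a m m' hC ha hm hm') as [M [hM hsmall]].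
assert (heC := exp_pos C).
exists (M / (3 * exp C)). split; [apply Rdiv_lt_0_compat; lra|].
intros Y Y' HC1 Hpos Hineq HY0 t ht.
assert (hstart : 2 * Y 0 * exp C < M).
{ apply (Rmult_le_compat_r (3 * exp C)) in HY0; [|lra].
  replace (M / (3 * exp C) * (3 * exp C)) with M in HY0 by (field; lra).
  assert (0 <= Y 0) by (apply Hpos; lra). nra. }
assert (hw := weighted_bound C a m m' M Y Y' hC ha hm hm' hM hsmall HC1 Hpos Hineq hstart t ht).
assert (hE := Rpower_pos (1 + t) a).
apply (Rmult_le_reg_r (Rpower (1 + t) a)); [exact hE|].
replace (2 * exp (C * t / (1 + t)) * Y 0 / Rpower (1 + t) a * Rpower (1 + t) a)
  with (2 * Y 0 * exp (C * t / (1 + t))) by (field; lra).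
exact hw.
Qed.
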